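(* For every series-parallel rational expression $e$ there exists a pomset automaton $A$ that is well-nested and finitely supported and has a state $q_e$ such that $L_A(q_e)=[\![e]\!]$.
   Context: Fix a finite alphabet $\Sigma$. A pomset is an isomorphism class of labelled posets $\langle C, \leq, \lambda\rangle$ with $\lambda: C \to \Sigma$; $1$ is the empty pomset and $a\in\Sigma$ the one-point pomset labelled $a$. Sequential composition $U\cdot V$ puts the two (disjoint) pomsets side by side with every element of $U$ below every element of $V$; parallel composition $U\parallel V$ is the disjoint union without extra order. $\mathsf{Pom}^{\mathsf{sp}}$ is the smallest set of pomsets containing $1$ and all $a\in\Sigma$, closed under $\cdot$ and $\parallel$. For pomset languages, $\mathcal U\cdot\mathcal V$ and $\mathcal U\parallel\mathcal V$ are pointwise, $\mathcal U^*=\bigcup_n\mathcal U^n$, $\mathcal U^\dagger=\bigcup_n\mathcal U^{(n)}$ with $\mathcal U^0=\mathcal U^{(0)}=\{1\}$, $\mathcal U^{n+1}=\mathcal U\cdot\mathcal U^n$, $\mathcal U^{(n+1)}=\mathcal U\parallel\mathcal U^{(n)}$. Spr-expressions: $e,f ::= 0 \mid 1 \mid a\in\Sigma \mid e+f \mid e\cdot f \mid e\parallel f \mid e^* \mid e^\dagger$, with $[\![0]\!]=\emptyset$, $[\![1]\!]=\{1\}$, $[\![a]\!]=\{a\}$, and $+,\cdot,\parallel,{}^*,{}^\dagger$ interpreted as union and the language operations above. A PA is $A=\langle Q,\delta,\gamma,F\rangle$ with $F\subseteq Q$, $\delta:Q\times\Sigma\to Q$, $\gamma:Q^3\to Q$,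 containing states $\bot\notin F$, $\top\in F$ with $\delta(\bot,a)=\delta(\top,a)=\bot$, $\gamma(\bot,r,s)=\gamma(\top,r,s)=\bot$. Traces: the smallest relation with $q\xrightarrow{1}_A q$; $q\xrightarrow{a}_A\delta(q,a)$; $q\xrightarrow{U}_A q''\xrightarrow{V}_A q'$ implies $q\xrightarrow{U\cdot V}_A q'$; $r\xrightarrow{U}_A r'\in F$ and $s\xrightarrow{V}_A s'\in F$ imply $q\xrightarrow{U\parallel V}_A\gamma(q,r,s)$. $L_A(q)=\{U:\exists q'\in F.\ q\xrightarrow{U}_A q'\}$. $\preceq_A$ is the smallest preorder on $Q$ with $r,s\preceq_A q$ when $\gamma(q,r,s)\neq\bot$, $\delta(q,a)\preceq_A q$, and $\gamma(q,r,s)\preceq_A q$; $q\prec_A q'$ iff $q\preceq_A q'$ and $q'\not\preceq_A q$. $\pi_A(q)$ is the smallest $\preceq_A$-downward-closed set containing $q$; $A$ is finitely supported if all $\pi_A(q)$ are finite. A state $q$ is sequential if $\gamma(q,r,s)\neq\bot$ implies $r,s\prec_A q$; $q\in F$ is recursive if it is not sequential, $\delta(q,a)=\bot$ for all $a$, and $\gamma(q,r,s)\neq\bot$ implies $s=q$, $r\prec_A q$, $\gamma(q,r,s)=\top$. $A$ is well-nested if each state is sequential or recursive. *)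

From Stdlib Require Import Relations.
From Stdlib Require List.
From mathcomp Require Import all_boot.
Set Implicit Arguments.
Unset Strict Implicit.
Unset Printing Implicit Defensive.

(* Labelled posets; pomsets are their isomorphism classes.  We work    *)
(* with representatives and make every language isomorphism-closed.  *)

Definition is_porder (A : Type) (R : A -> A -> bool) : Prop :=
  [/\ forall x, R x x,
      forall x y, R x y -> R y x -> x = y &
      forall x y z, R x y -> R y z -> R x z].

Record lposet (Sigma : Type) := LPoset {
  lp_size : nat;
  lp_le : 'I_lp_size -> 'I_lp_size -> bool;
  lp_lab : 'I_lp_size -> Sigma;
  lp_porder : is_porder lp_le }.
Arguments lp_size {Sigma} l.
Arguments lp_le {Sigma} l _ _.
Arguments lp_lab {Sigma} l _.
Arguments lp_porder {Sigma} l.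

Definition lp_iso (Sigma : Type) (U V : lposet Sigma) : Prop :=
  exists f : 'I_(lp_size U) -> 'I_(lp_size V),
    [/\ bijective f,
        forall x, lp_lab V (f x) = lp_lab U x &
        forall x y, lp_le U x y = lp_le V (f x) (f y)].

Lemma porder_inj (A B : Type) (R : B -> B -> bool) (f : A -> B) :
  injective f -> is_porder R -> is_porder (fun x y => R (f x) (f y)).
Proof.
move=> finj [r a t]; split=> //.
- by move=> x y h1 h2; apply: finj; apply: a.
- by move=> x y z; apply: t.
Qed.

Lemma ord0_False (x : 'I_0) : False.
Proof. by case: x. Qed.

Definition lp_one (Sigma : Type) : lposet Sigma.
Proof.
refine (@LPoset Sigma 0 (fun _ _ => true) (fun x => False_rect _ (ord0_False x)) _).
by split=> [[]|[]|[]].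
Defined.

Arguments lp_one Sigma : clear implicits.

Definition lp_atom (Sigma : Type) (a : Sigma) : lposet Sigma.
Proof.
refine (@LPoset Sigma 1 (fun x y => x == y) (fun _ => a) _).
split=> [x|x y /eqP //|x y z /eqP -> //]; exact: eqxx.
Defined.

Definition seq_rel (A B : Type) (RA : A -> A -> bool) (RB : B -> B -> bool)
  (u v : A + B) : bool :=
  match u, v with
  | inl x, inl y => RA x y
  | inr x, inr y => RB x y
  | inl _, inr _ => true
  | inr _, inl _ => false
  end.

Definition par_rel (A B : Type) (RA : A -> A -> bool) (RB : B -> B -> bool)
  (u v : A + B) : bool :=
  match u, v with
  | inl x, inl y => RA x y
  | inr x, inr y => RB x y
  | _, _ => false
  end.

Lemma seq_rel_porder A B RA RB :
  is_porder RA -> is_porder RB -> is_porder (@seq_rel A B RA RB).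
Proof.
move=> [ra aa ta] [rb ab tb]; split.
- by case.
- by case=> x [] y //= h1 h2; [rewrite (aa _ _ h1 h2)|rewrite (ab _ _ h1 h2)].
- by case=> x [] y [] z //=; [apply: ta|apply: tb].
Qed.

Lemma par_rel_porder A B RA RB :
  is_porder RA -> is_porder RB -> is_porder (@par_rel A B RA RB).
Proof.
move=> [ra aa ta] [rb ab tb]; split.
- by case.
- by case=> x [] y //= h1 h2; [rewrite (aa _ _ h1 h2)|rewrite (ab _ _ h1 h2)].
- by case=> x [] y [] z //=; [apply: ta|apply: tb].
Qed.

Lemma split_inj m n : injective (@split m n).
Proof. exact: can_inj (@splitK m n). Qed.

Definition lab_sum (Sigma : Type) m n (l1 : 'I_m -> Sigma) (l2 : 'I_n -> Sigma)
  (x : 'I_(m + n)) : Sigma :=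
  match split x with inl i => l1 i | inr j => l2 j end.

Definition lp_seq (Sigma : Type) (U V : lposet Sigma) : lposet Sigma :=
  @LPoset Sigma (lp_size U + lp_size V)
    (fun x y => seq_rel (lp_le U) (lp_le V) (split x) (split y))
    (lab_sum (lp_lab U) (lp_lab V))
    (porder_inj (@split_inj _ _)
       (seq_rel_porder (lp_porder U) (lp_porder V))).

Definition lp_par (Sigma : Type) (U V : lposet Sigma) : lposet Sigma :=
  @LPoset Sigma (lp_size U + lp_size V)
    (fun x y => par_rel (lp_le U) (lp_le V) (split x) (split y))
    (lab_sum (lp_lab U) (lp_lab V))
    (porder_inj (@split_inj _ _)
       (par_rel_porder (lp_porder U) (lp_porder V))).

Definition planguage (Sigma : Type) := lposet Sigma -> Prop.

Definition lang_seq (Sigma : Type) (L M : planguage Sigma) : planguage Sigma :=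
  fun W => exists U V, [/\ L U, M V & lp_iso W (lp_seq U V)].

Definition lang_par (Sigma : Type) (L M : planguage Sigma) : planguage Sigma :=
  fun W => exists U V, [/\ L U, M V & lp_iso W (lp_par U V)].

Definition lang_one (Sigma : Type) : planguage Sigma :=
  fun W => lp_iso W (lp_one Sigma).
Arguments lang_one Sigma : clear implicits.

Fixpoint lang_seqpow (Sigma : Type) (L : planguage Sigma) (n : nat) :=
  match n with
  | 0 => lang_one Sigma
  | k.+1 => lang_seq L (lang_seqpow L k)
  end.

Fixpoint lang_parpow (Sigma : Type) (L : planguage Sigma) (n : nat) :=
  match n with
  | 0 => lang_one Sigma
  | k.+1 => lang_par L (lang_parpow L k)
  end.

Inductive spr (Sigma : Type) : Type :=
| spr_zero
| spr_one
| spr_atom of Sigma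
| spr_plus of spr Sigma & spr Sigma
| spr_seq of spr Sigma & spr Sigma
| spr_par of spr Sigma & spr Sigma
| spr_star of spr Sigma
| spr_dagger of spr Sigma.

Fixpoint spr_sem (Sigma : Type) (e : spr Sigma) : planguage Sigma :=
  match e with
  | spr_zero => fun _ => False
  | spr_one => lang_one Sigma
  | spr_atom a => fun W => lp_iso W (lp_atom a)
  | spr_plus e f => fun W => spr_sem e W \/ spr_sem f W
  | spr_seq e f => lang_seq (spr_sem e) (spr_sem f)
  | spr_par e f => lang_par (spr_sem e) (spr_sem f)
  | spr_star e => fun W => exists n, lang_seqpow (spr_sem e) n W
  | spr_dagger e => fun W => exists n, lang_parpow (spr_sem e) n W
  end.

Record PA (Sigma : Type) := MkPA {
  pa_Q : Type;
  pa_delta : pa_Q -> Sigma -> pa_Q;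
  pa_gamma : pa_Q -> pa_Q -> pa_Q -> pa_Q;
  pa_F : pa_Q -> Prop;
  pa_bot : pa_Q;
  pa_top : pa_Q;
  pa_bot_notF : ~ pa_F pa_bot;
  pa_top_F : pa_F pa_top;
  pa_delta_bot : forall a, pa_delta pa_bot a = pa_bot;
  pa_delta_top : forall a, pa_delta pa_top a = pa_bot;
  pa_gamma_bot : forall r s, pa_gamma pa_bot r s = pa_bot;
  pa_gamma_top : forall r s, pa_gamma pa_top r s = pa_bot }.
Arguments pa_Q {Sigma} p.
Arguments pa_delta {Sigma} p _ _.
Arguments pa_gamma {Sigma} p _ _ _.
Arguments pa_F {Sigma} p _.
Arguments pa_bot {Sigma} p.
Arguments pa_top {Sigma} p.

Section PAdefs.
Variables (Sigma : Type) (A : PA Sigma).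
Local Notation Q := (pa_Q A).
Local Notation delta := (pa_delta A).
Local Notation gamma := (pa_gamma A).
Local Notation F := (pa_F A).
Local Notation bot := (pa_bot A).
Local Notation top := (pa_top A).

Inductive pa_trace : Q -> lposet Sigma -> Q -> Prop :=
| tr_one q W : lp_iso W (lp_one Sigma) -> pa_trace q W q
| tr_atom q a W : lp_iso W (lp_atom a) -> pa_trace q W (delta q a)
| tr_seq q q'' q' U V W :
    pa_trace q U q'' -> pa_trace q'' V q' ->
    lp_iso W (lp_seq U V) -> pa_trace q W q'
| tr_par q r r' s s' U V W :
    pa_trace r U r' -> F r' -> pa_trace s V s' -> F s' ->
    lp_iso W (lp_par U V) -> pa_trace q W (gamma q r s).

Definition pa_lang (q : Q) : planguage Sigma :=
  fun U => exists q', F q' /\ pa_trace q U q'.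

(* generating steps of the preorder: pa_step p q means p ⪯_A q is required *)
Definition pa_step (p q : Q) : Prop :=
  (exists r s, gamma q r s <> bot /\ (p = r \/ p = s))
  \/ (exists a, p = delta q a)
  \/ (exists r s, p = gamma q r s).

Definition pa_le : Q -> Q -> Prop := clos_refl_trans Q pa_step.

Definition pa_lt (p q : Q) : Prop := pa_le p q /\ ~ pa_le q p.

Definition pa_support (q : Q) : Q -> Prop := fun p => pa_le p q.

Definition finitely_supported : Prop :=
  forall q, exists l : list Q, forall p, pa_support q p -> List.In p l.

Definition pa_sequential (q : Q) : Prop :=
  forall r s, gamma q r s <> bot -> pa_lt r q /\ pa_lt s q.

Definition pa_recursive (q : Q) : Prop :=
  [/\ F q, ~ pa_sequential q, (forall a, delta q a = bot) &
      forall r s, gamma q r s <> bot ->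
        [/\ s = q, pa_lt r q & gamma q r s = top]].

Definition well_nested : Prop :=
  forall q, pa_sequential q \/ pa_recursive q.

End PAdefs.

Arguments pa_trace {Sigma} A _ _ _.
Arguments pa_lang {Sigma} A q _.
Arguments pa_step {Sigma} A p q.
Arguments pa_le {Sigma} A _ _.
Arguments pa_lt {Sigma} A p q.
Arguments pa_support {Sigma} A q _.
Arguments pa_sequential {Sigma} A q.
Arguments pa_recursive {Sigma} A q.
Arguments finitely_supported {Sigma} A.
Arguments well_nested {Sigma} A.

From Stdlib Require Import Relations.
From Stdlib Require List.
From HB Require Import structures.
From mathcomp Require Import all_boot zify.
Set Implicit Arguments.
Unset Strict Implicit.
Unset Printing Implicit Defensive.

(* The automaton takes the expressions themselves as states, with 0 and 1 as
   ⊥ and ⊤, so that state e accepts [[e]].  A fork γ(q, r, 1) whose second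
   branch is empty acts as a call of r, since U ∥ 1 ≅ U: this runs e + f,
   e · f (continuing in state f) and e* (returning to e* ); e ∥ f forks e and
   f, and e† forks e and e† itself, which makes the states e† the only
   recursive ones.  Soundness rests on the invariant that q --W--> q' and
   X ∈ [[q']] imply W · X ∈ [[q]].  Everything below a state in ⪯ is 0, 1 or
   a subexpression, and every fork except the self-fork of e† strictly
   decreases the size of the expression; this gives finite support and
   well-nestedness. *)

Lemma mem_In (T : eqType) (x : T) s : x \in s -> List.In x s.
Proof. by elim: s => //= y s IHs; rewrite in_cons => /predU1P[->|/IHs]; [left|right]. Qed.

Section PomsetIso.
Variable Sigma : Type.
Implicit Types U V W X : lposet Sigma.

Lemma lp_iso_refl W : lp_iso W W.
Proof. by exists id; split=> //; exists id. Qed.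

Lemma lp_iso_sym U V : lp_iso U V -> lp_iso V U.
Proof.
case=> f [[g fK gK] flab fle]; exists g; split.
- by exists f.
- by move=> x; rewrite -{2}(gK x) flab.
- by move=> x y; rewrite fle !gK.
Qed.

Lemma lp_iso_trans U V W : lp_iso U V -> lp_iso V W -> lp_iso U W.
Proof.
case=> f [fbij flab fle] [g [gbij glab gle]]; exists (g \o f); split.
- exact: bij_comp.
- by move=> x /=; rewrite glab flab.
- by move=> x y /=; rewrite fle gle.
Qed.

Lemma lp_iso_size U V : lp_iso U V -> lp_size U = lp_size V.
Proof.
case=> f [[g fK gK] _ _]; rewrite -[lp_size U]card_ord -[lp_size V]card_ord.
by apply/eqP; rewrite eqn_leq (leq_card _ (can_inj fK)) (leq_card _ (can_inj gK)).
Qed.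

Lemma lp_iso_oneP W : lp_iso W (lp_one Sigma) <-> lp_size W = 0.
Proof.
split=> [/lp_iso_size //|W0]; exists (cast_ord W0); split.
- by exists (cast_ord (esym W0)); [exact: cast_ordK | exact: cast_ordKV].
- by move=> x; case: (ord0_False (cast_ord W0 x)).
- by move=> x; case: (ord0_False (cast_ord W0 x)).
Qed.

Lemma lp_iso_cast U V (eqUV : lp_size U = lp_size V) :
  (forall x, lp_lab V (cast_ord eqUV x) = lp_lab U x) ->
  (forall x y, lp_le U x y = lp_le V (cast_ord eqUV x) (cast_ord eqUV y)) ->
  lp_iso U V.
Proof.
move=> clab cle; exists (cast_ord eqUV); split=> //.
by exists (cast_ord (esym eqUV)); [exact: cast_ordK | exact: cast_ordKV].
Qed.

(* Case on every [split] in the goal; what remains is arithmetic on the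
   values of the ordinals. *)
Ltac split_cases :=
  simpl; unfold lab_sum;
  repeat match goal with
  | |- context [@split ?m ?n ?x] => case: (@splitP m n x) => [?|?] ? /=
  end;
  repeat match goal with
  | i : 'I_?n |- _ => lazymatch goal with
      | _ : is_true (nat_of_ord i < n) |- _ => fail
      | _ => have := ltn_ord i; move=> ?
      end
  end;
  simpl in *;
  first [by [] | exfalso; lia | f_equal; apply: val_inj => /=; lia].

Lemma lp_seq1 W X : lp_size X = 0 -> lp_iso (lp_seq W X) W.
Proof.
move=> X0; have eqWX : lp_size (lp_seq W X) = lp_size W by rewrite /= X0 addn0.
by apply: (@lp_iso_cast _ _ eqWX) => [x|x y]; split_cases.
Qed.

Lemma lp_1seq W X : lp_size W = 0 -> lp_iso (lp_seq W X) X.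
Proof.
move=> W0; have eqWX : lp_size (lp_seq W X) = lp_size X by rewrite /= W0.
by apply: (@lp_iso_cast _ _ eqWX) => [x|x y]; split_cases.
Qed.

Lemma lp_par1 W X : lp_size X = 0 -> lp_iso (lp_par W X) W.
Proof.
move=> X0; have eqWX : lp_size (lp_par W X) = lp_size W by rewrite /= X0 addn0.
by apply: (@lp_iso_cast _ _ eqWX) => [x|x y]; split_cases.
Qed.

Lemma lp_seqA U V W :
  lp_iso (lp_seq (lp_seq U V) W) (lp_seq U (lp_seq V W)).
Proof.
have eqUVW : lp_size (lp_seq (lp_seq U V) W) = lp_size (lp_seq U (lp_seq V W)).
  by rewrite /= addnA.
by apply: (@lp_iso_cast _ _ eqUVW) => [x|x y]; split_cases.
Qed.

Definition sum_map (A B A' B' : Type) (f : A -> A') (g : B -> B') (u : A + B) :=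
  match u with inl a => inl (f a) | inr b => inr (g b) end.

Lemma lp_seq_iso U U' V V' :
  lp_iso U U' -> lp_iso V V' -> lp_iso (lp_seq U V) (lp_seq U' V').
Proof.
case=> f [[f' fK f'K] flab fle] [g [[g' gK g'K] glab gle]].
exists (fun x => unsplit (sum_map f g (split x))); split.
- exists (fun x => unsplit (sum_map f' g' (split x))) => x;
    by rewrite unsplitK -[RHS]splitK; case: (split x) => y; rewrite /= ?fK ?gK ?f'K ?g'K.
- by move=> x; rewrite /= /lab_sum unsplitK; case: (split x) => a /=.
- by move=> x y; rewrite /= !unsplitK; case: (split x) => a; case: (split y) => b /=.
Qed.

Lemma lp_seq_par1 U V X :
  lp_size V = 0 -> lp_iso (lp_seq (lp_par U V) X) (lp_seq U X).
Proof. by move=> V0; apply: lp_seq_iso (lp_par1 U V0) (lp_iso_refl X). Qed.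

End PomsetIso.

Section IsoClosedLanguages.
Variable Sigma : Type.
Implicit Types (L M : planguage Sigma) (W : lposet Sigma).

Definition iso_closed L := forall W W', lp_iso W W' -> L W -> L W'.

Lemma lp_iso_closed X : iso_closed (fun W => lp_iso W X).
Proof. by move=> W W' /lp_iso_sym; apply: lp_iso_trans. Qed.

Lemma lang_seq_closed L M : iso_closed (lang_seq L M).
Proof.
move=> W W' /lp_iso_sym iW'W [U [V [LU MV iW]]].
by exists U, V; split=> //; apply: lp_iso_trans iW'W iW.
Qed.

Lemma lang_par_closed L M : iso_closed (lang_par L M).
Proof.
move=> W W' /lp_iso_sym iW'W [U [V [LU MV iW]]].
by exists U, V; split=> //; apply: lp_iso_trans iW'W iW.
Qed.

Lemma lang_seqpow_closed L n : iso_closed (lang_seqpow L n).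
Proof. by case: n => [|n]; [apply: lp_iso_closed | apply: lang_seq_closed]. Qed.

Lemma lang_parpow_closed L n : iso_closed (lang_parpow L n).
Proof. by case: n => [|n]; [apply: lp_iso_closed | apply: lang_par_closed]. Qed.

Lemma spr_sem_closed (e : spr Sigma) : iso_closed (spr_sem e).
Proof.
elim: e => /= [||a|e IHe f IHf|e _ f _|e _ f _|e _|e _] W W' iW.
- by [].
- exact: lp_iso_closed iW.
- exact: lp_iso_closed iW.
- by case=> [/(IHe _ _ iW)|/(IHf _ _ iW)]; [left|right].
- exact: lang_seq_closed iW.
- exact: lang_par_closed iW.
- by case=> n /(lang_seqpow_closed iW); exists n.
- by case=> n /(lang_parpow_closed iW); exists n.
Qed.

End IsoClosedLanguages.

Definition spr_comparable (Sigma : eqType) : comparable (spr Sigma).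
Proof. rewrite /comparable /decidable; decide equality; exact: eq_comparable. Defined.

HB.instance Definition _ (Sigma : eqType) :=
  comparableMixin (@spr_comparable Sigma).

Section Subexpressions.
Variable Sigma : eqType.
Implicit Types e p q : spr Sigma.

Fixpoint spr_size e : nat :=
  match e with
  | spr_plus e f | spr_seq e f | spr_par e f => (spr_size e + spr_size f).+1
  | spr_star e | spr_dagger e => (spr_size e).+1
  | _ => 1
  end.

Fixpoint subexprs e : seq (spr Sigma) :=
  e :: match e with
       | spr_plus e f | spr_seq e f | spr_par e f => subexprs e ++ subexprs f
       | spr_star e | spr_dagger e => subexprs e
       | _ => [::]
       end.

Definition spr_closure q := [:: spr_zero Sigma, spr_one Sigma & subexprs q].

Lemma spr_size_gt0 e : 0 < spr_size e.
Proof. by case: e. Qed.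

Lemma subexprs_self e : e \in subexprs e.
Proof. by case: e => *; apply: mem_head. Qed.

Lemma subexprs_trans p q : p \in subexprs q -> {subset subexprs p <= subexprs q}.
Proof.
elim: q => [||a|e IHe f IHf|e IHe f IHf|e IHe f IHf|e IHe|e IHe];
  cbn [subexprs]; rewrite in_cons => /predU1P[-> //|];
  rewrite ?mem_cat ?in_nil //.
1-3: by case/orP=> [/IHe|/IHf] sub x /sub; rewrite in_cons mem_cat => ->; rewrite ?orbT.
all: by move=> /IHe sub x /sub; rewrite in_cons => ->; rewrite orbT.
Qed.

Lemma subexprs_size p q : p \in subexprs q -> spr_size p <= spr_size q.
Proof.
elim: q => [||a|e IHe f IHf|e IHe f IHf|e IHe f IHf|e IHe|e IHe];
  cbn [subexprs]; rewrite in_cons => /predU1P[-> //|];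
  rewrite ?mem_cat ?in_nil //=.
1-3: by case/orP=> [/IHe|/IHf]; lia.
all: by move/IHe; lia.
Qed.

Lemma spr_closure_trans p q :
  p \in spr_closure q -> {subset spr_closure p <= spr_closure q}.
Proof.
rewrite !in_cons => /or3P[/eqP->|/eqP->|/subexprs_trans sub] x;
  rewrite !in_cons ?in_nil ?orbF => /or3P[->|->|] //; rewrite ?orbT //.
- by move->.
- by move->; rewrite orbT.
- by move/sub->; rewrite !orbT.
Qed.

Lemma spr_closure_size p q : p \in spr_closure q -> spr_size p <= spr_size q.
Proof.
by rewrite !inE => /or3P[/eqP->|/eqP->|/subexprs_size]; rewrite ?spr_size_gt0.
Qed.

Lemma spr_closure_self q : q \in spr_closure q.
Proof. by rewrite !in_cons subexprs_self !orbT. Qed.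

End Subexpressions.

Section ExpressionAutomaton.
Variable Sigma : eqType.
Implicit Types (e f p q r s : spr Sigma) (U V W X : lposet Sigma).
Local Notation Zero := (spr_zero Sigma).
Local Notation One := (spr_one Sigma).

Definition spr_delta q (a : Sigma) : spr Sigma :=
  if q is spr_atom b then if a == b then One else Zero else Zero.

Definition spr_gamma q r s : spr Sigma :=
  match q with
  | spr_plus e f => if (s == One) && ((r == e) || (r == f)) then One else Zero
  | spr_seq e f => if (s == One) && (r == e) then f else Zero
  | spr_par e f => if (r == e) && (s == f) then One else Zero
  | spr_star e => if (s == One) && (r == e) then q else Zero
  | spr_dagger e => if (r == e) && (s == q) then One else Zero
  | _ => Zero
  end.

Definition spr_final q : Prop :=
  if q is (spr_one | spr_star _ | spr_dagger _) then True else False.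

Definition spr_pa : PA Sigma :=
  @MkPA Sigma (spr Sigma) spr_delta spr_gamma spr_final Zero One id I
    (fun _ => erefl) (fun _ => erefl) (fun _ _ => erefl) (fun _ _ => erefl).

Lemma spr_final_one q : spr_final q -> spr_sem q (lp_one Sigma).
Proof. by case: q => //= *; [|exists 0|exists 0]; apply: lp_iso_refl. Qed.

Lemma spr_gamma_sound q r s U V X :
  spr_sem r U -> spr_sem s V -> spr_sem (spr_gamma q r s) X ->
  spr_sem q (lp_seq (lp_par U V) X).
Proof.
move=> rU; case: q => //= [e f|e f|e f|e|e]; case: ifP => //.
- case/andP=> /eqP -> /orP rE /lp_iso_oneP V0 /lp_iso_oneP X0.
  have UVX_U := lp_iso_trans (lp_seq_par1 U X V0) (lp_seq1 U X0).
  case: rE => /eqP <-; [left|right];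
    by apply: spr_sem_closed rU; apply: lp_iso_sym.
- case/andP=> /eqP -> /eqP <- /lp_iso_oneP V0 fX.
  by exists U, X; split=> //; apply: lp_seq_par1.
- case/andP=> /eqP <- /eqP <- fV /lp_iso_oneP X0.
  by exists U, V; split=> //; apply: lp_seq1.
- case/andP=> /eqP -> /eqP <- /lp_iso_oneP V0 [n Xn].
  by exists n.+1, U, X; split=> //; apply: lp_seq_par1.
- case/andP=> /eqP <- /eqP -> [n Vn] /lp_iso_oneP X0.
  by exists n.+1, U, V; split=> //; apply: lp_seq1.
Qed.

Lemma spr_trace_sound q W q' : pa_trace spr_pa q W q' ->
  forall X, spr_sem q' X -> spr_sem q (lp_seq W X).
Proof.
elim=> {q W q'} [q W /lp_iso_oneP W0 X|q a W iW X|q q'' q' U V W _ IHU _ IHV iW X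
                |q r r' s s' U V W _ IHr Fr _ IHs Fs iW X] q'X.
- exact: spr_sem_closed (lp_iso_sym (lp_1seq X W0)) q'X.
- case: q q'X => //= b; case: eqP => // <- /lp_iso_oneP X0.
  exact: lp_iso_closed (lp_iso_sym (lp_seq1 W X0)) iW.
- apply: spr_sem_closed (IHU _ (IHV _ q'X)).
  apply: lp_iso_trans (lp_iso_sym (lp_seqA U V X)) _.
  exact: lp_seq_iso (lp_iso_sym iW) (lp_iso_refl X).
- have rU : spr_sem r U by apply: spr_sem_closed (IHr _ (spr_final_one Fr)); apply: lp_seq1.
  have sV : spr_sem s V by apply: spr_sem_closed (IHs _ (spr_final_one Fs)); apply: lp_seq1.
  apply: spr_sem_closed (spr_gamma_sound rU sV q'X).
  exact: lp_seq_iso (lp_iso_sym iW) (lp_iso_refl X).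
Qed.

Lemma spr_trace_call q r r' U : pa_trace spr_pa r U r' -> spr_final r' ->
  pa_trace spr_pa q U (spr_gamma q r One).
Proof.
move=> rU Fr'; apply: (@tr_par _ spr_pa q r r' One One U (lp_one Sigma)) => //.
- exact/tr_one/lp_iso_refl.
- exact/lp_iso_sym/lp_par1.
Qed.

Lemma spr_lang_complete e W : spr_sem e W -> pa_lang spr_pa e W.
Proof.
elim: e W => /= [||a|e IHe f IHf|e IHe f IHf|e IHe f IHf|e IHe|e IHe] W.
- by [].
- by move=> W1; exists One; split=> //; apply: tr_one.
- move=> Wa; exists One; split=> //.
  by have := @tr_atom _ spr_pa (spr_atom a) a W Wa; rewrite /= eqxx.
- case=> [/IHe|/IHf] [q' [Fq' eW]]; exists One; split=> //.
  + by have := spr_trace_call (spr_plus e f) eW Fq'; rewrite /= !eqxx.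
  + by have := spr_trace_call (spr_plus e f) eW Fq'; rewrite /= !eqxx orbT.
- case=> U [V [/IHe [q1 [F1 eU]] /IHf [q2 [F2 fV]] iW]].
  exists q2; split=> //; apply: (@tr_seq _ spr_pa _ f _ U V W _ fV iW).
  by have := spr_trace_call (spr_seq e f) eU F1; rewrite /= !eqxx.
- case=> U [V [/IHe [q1 [F1 eU]] /IHf [q2 [F2 fV]] iW]].
  exists One; split=> //.
  by have := @tr_par _ spr_pa (spr_par e f) _ _ _ _ U V W eU F1 fV F2 iW; rewrite /= !eqxx.
- suff seqpow_loop n Y :
      lang_seqpow (spr_sem e) n Y -> pa_trace spr_pa (spr_star e) Y (spr_star e).
    by case=> n /seqpow_loop eW; exists (spr_star e).
  elim: n Y => [|n IHn] Y /=; first exact: tr_one.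
  case=> U [V [/IHe [q1 [F1 eU]] /IHn eV iW]]; apply: (tr_seq _ eV iW).
  by have := spr_trace_call (spr_star e) eU F1; rewrite /= !eqxx.
- case=> n; elim: n W => [|n IHn] W /=.
    by move=> W1; exists (spr_dagger e); split=> //; apply: tr_one.
  case=> U [V [/IHe [q1 [F1 eU]] /IHn [q2 [F2 eV]] iW]]; exists One; split=> //.
  have := @tr_par _ spr_pa (spr_dagger e) _ _ _ _ U V W eU F1 eV F2 iW.
  by rewrite /= !eqxx.
Qed.

Lemma spr_langP e W : pa_lang spr_pa e W <-> spr_sem e W.
Proof.
split=> [[q' [Fq' eW]]|]; last exact: spr_lang_complete.
have := spr_trace_sound eW (spr_final_one Fq').
by apply: spr_sem_closed; apply: lp_seq1.
Qed.

Lemma spr_gamma_args_closure q r s :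
  spr_gamma q r s != Zero -> (r \in spr_closure q) && (s \in spr_closure q).
Proof.
case: q => //= [e f|e f|e f|e|e]; case: ifP => // /andP[].
1: move=> /eqP -> /orP[] /eqP -> _.
all: try move=> /eqP -> /eqP -> _.
all: by rewrite /spr_closure; cbn [subexprs];
  rewrite !(in_cons, mem_cat, subexprs_self, eqxx, orbT, orTb).
Qed.

Lemma spr_delta_closure q a : spr_delta q a \in spr_closure q.
Proof.
have: spr_delta q a \in [:: Zero; One].
  by rewrite /spr_delta !inE; case: q => [||b|*|*|*|*|*] //=; case: (a == b).
by rewrite !inE => /orP[] /eqP ->; rewrite eqxx ?orbT.
Qed.

Lemma spr_gamma_closure q r s : spr_gamma q r s \in spr_closure q.
Proof.
case: q => [||a|e f|e f|e f|e|e] /=; try case: ifP => _;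
  by rewrite /spr_closure; cbn [subexprs];
    rewrite !(in_cons, mem_cat, subexprs_self, eqxx, orbT, orTb).
Qed.

Lemma pa_step_closure p q : pa_step spr_pa p q -> p \in spr_closure q.
Proof.
case=> [[r [s [/eqP gamma_neq0 [->|->]]]]|[[a ->]|[r [s ->]]]].
- by case/andP: (spr_gamma_args_closure gamma_neq0).
- by case/andP: (spr_gamma_args_closure gamma_neq0).
- exact: spr_delta_closure.
- exact: spr_gamma_closure.
Qed.

Lemma pa_le_closure p q : pa_le spr_pa p q -> p \in spr_closure q.
Proof.
elim=> [{}p {}q /pa_step_closure //|{}p|x y z _ xy _ yz].
- exact: spr_closure_self.
- exact: spr_closure_trans yz _ xy.
Qed.

Lemma pa_le_size p q : pa_le spr_pa p q -> spr_size p <= spr_size q.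
Proof. by move/pa_le_closure/spr_closure_size. Qed.

Lemma pa_lt_step p q :
  pa_step spr_pa p q -> spr_size p < spr_size q -> pa_lt spr_pa p q.
Proof.
by move=> pq ltpq; split; [apply: rt_step | move/pa_le_size; rewrite leqNgt ltpq].
Qed.

Lemma spr_gamma_size q r s : spr_gamma q r s != Zero ->
  (forall e, q <> spr_dagger e) -> spr_size r < spr_size q /\ spr_size s < spr_size q.
Proof.
case: q => //= [e f|e f|e f|e|e]; case: ifP => // /andP[].
all: have e_gt0 := spr_size_gt0 e.
1-3: have f_gt0 := spr_size_gt0 f.
- by move=> /eqP -> /orP[] /eqP -> _ _ /=; lia.
- by move=> /eqP -> /eqP -> _ _ /=; lia.
- by move=> /eqP -> /eqP -> _ _ /=; lia.
- by move=> /eqP -> /eqP -> _ _ /=; lia.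
- by move=> _ _ _ /(_ e).
Qed.

Lemma spr_sequential q : (forall e, q <> spr_dagger e) -> pa_sequential spr_pa q.
Proof.
move=> not_dagger r s /eqP gamma_neq0.
have [ltr lts] := spr_gamma_size gamma_neq0 not_dagger.
by split; apply: pa_lt_step => //; left; exists r, s; split; auto; apply/eqP.
Qed.

Lemma spr_recursive e : pa_recursive spr_pa (spr_dagger e).
Proof.
have gamma_call : pa_gamma spr_pa (spr_dagger e) e (spr_dagger e) = One.
  by rewrite /= !eqxx.
have e_lt : pa_lt spr_pa e (spr_dagger e).
  apply: pa_lt_step => //; left; exists e, (spr_dagger e).
  by rewrite gamma_call; split; [|left].
split=> //.
- move=> dagger_seq; case: (dagger_seq e (spr_dagger e)) => [|_ [_]].
    by rewrite gamma_call.
  by apply; apply: rt_refl.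
- by move=> r s /=; case: ifP => // /andP[/eqP -> /eqP ->].
Qed.

Lemma spr_well_nested : well_nested spr_pa.
Proof.
case=> [||a|e f|e f|e f|e|e]; [left..|right];
  by first [exact: spr_recursive | exact: spr_sequential].
Qed.

Lemma spr_finitely_supported : finitely_supported spr_pa.
Proof. by move=> q; exists (spr_closure q) => p /pa_le_closure /mem_In. Qed.

End ExpressionAutomaton.

Theorem mainTheorem2 (Sigma : finType) (e : spr Sigma) :
  exists (A : PA Sigma),
    [/\ well_nested A, finitely_supported A &
        exists q : pa_Q A, forall U : lposet Sigma, pa_lang A q U <-> spr_sem e U].
Proof.
exists (spr_pa Sigma); split; [exact: spr_well_nested | exact: spr_finitely_supported |].
by exists e => U; apply: spr_langP.
Qed.
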